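(* Fix $d\ge 2$ and for $d\times d$ density matrices $\rho,\sigma$ let $$\mathcal{F}_C(\rho,\sigma)=\frac{1-r}{2}+\frac{1+r}{2}\left[\operatorname{tr}(\rho\sigma)+\sqrt{1-\operatorname{tr}(\rho^2)}\sqrt{1-\operatorname{tr}(\sigma^2)}\right],\qquad r=\frac{1}{d-1}.$$ Then $\sqrt{1-\mathcal{F}_C(\rho,\sigma)}$ is a metric on the set of $d\times d$ density matrices.
   Context: A density matrix is a positive semidefinite complex matrix of unit trace. A metric is a function that is nonnegative, vanishes exactly on equal arguments, is symmetric, and satisfies the triangle inequality. *)

From mathcomp Require Import all_boot all_order all_algebra.
From mathcomp Require Import reals.
From mathcomp.real_closed Require Export complex.
Export GRing.Theory Num.Theory.

Set Implicit Arguments.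
Unset Strict Implicit.
Unset Printing Implicit Defensive.

Local Open Scope ring_scope.

Definition adjmx {C : numClosedFieldType} m n (A : 'M[C]_(m, n)) : 'M[C]_(n, m) :=
  (map_mx Num.conj A)^T.

(* Positive semidefinite: Hermitian with nonnegative quadratic form
   (in a numClosedFieldType, [0 <= z] means z is real and nonnegative). *)
Definition psd {C : numClosedFieldType} n (A : 'M[C]_n) : Prop :=
  adjmx A = A /\ forall v : 'cV[C]_n, 0 <= (adjmx v *m A *m v) 0 0.

Definition density_matrix {C : numClosedFieldType} n (A : 'M[C]_n) : Prop :=
  psd A /\ \tr A = 1.

Definition FC {C : numClosedFieldType} (d : nat) (rho sigma : 'M[C]_d) : C :=
  let r := ((d - 1)%:R)^-1 in
  (1 - r) / 2%:R + (1 + r) / 2%:R *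
    (\tr (rho *m sigma)
     + sqrtC (1 - \tr (rho *m rho)) * sqrtC (1 - \tr (sigma *m sigma))).

Definition distC {C : numClosedFieldType} (d : nat) (rho sigma : 'M[C]_d) : C :=
  sqrtC (1 - FC rho sigma).

(* D is a metric on the set S (values compared in the order of C,
   so [0 <= x] forces reality and nonnegativity). *)
Definition metric_on {T : Type} {C : numClosedFieldType}
    (S : T -> Prop) (D : T -> T -> C) : Prop :=
  [/\ (forall x y, S x -> S y -> 0 <= D x y),
      (forall x y, S x -> S y -> (D x y = 0 <-> x = y)),
      (forall x y, S x -> S y -> D x y = D y x) &
      (forall x y z, S x -> S y -> S z -> D x z <= D x y + D y z)].

From mathcomp Require Import all_boot all_order all_algebra.
From mathcomp Require Import sesquilinear spectral.
From mathcomp Require Import reals.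
From mathcomp.real_closed Require Import complex.
From mathcomp Require Import ring.
Import Order.TTheory GRing.Theory Num.Theory.

Set Implicit Arguments.
Unset Strict Implicit.
Unset Printing Implicit Defensive.

Local Open Scope ring_scope.
Local Open Scope sesquilinear_scope.

(* Map a density matrix rho to w(rho) = (rho, sqrt (1 - tr rho^2)) in C^(d^2 + 1),
   the first block carrying the Hilbert-Schmidt inner product.  The 2x2 principal
   minors |rho_ij|^2 <= rho_ii rho_jj give tr rho^2 <= (tr rho)^2 = 1, so w(rho) is a
   unit vector with <w(rho), w(sigma)> = tr (rho sigma) + sqrt (1 - tr rho^2) sqrt (1 - tr sigma^2).
   Hence 1 - F_C(rho, sigma) = (1 + r)/4 |w(rho) - w(sigma)|^2, and sqrt (1 - F_C) is a
   positive multiple of the Euclidean distance pulled back along the injective map w. *)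

Local Notation "''[' u , v ]" := (dotmx u v) : ring_scope.
Local Notation "''[' u ]" := (dotmx u u) : ring_scope.

Lemma metric_on_dotmx_pullback (T : Type) (C : numClosedFieldType) (m : nat)
    (S : T -> Prop) (D : T -> T -> C) (f : T -> 'rV[C]_m) (k : C) :
  0 < k -> injective f ->
  (forall x y, S x -> S y -> D x y = sqrtC (k * '[f x - f y])) ->
  metric_on S D.
Proof.
move=> k_gt0 f_inj DE.
have {}DE x y : S x -> S y -> D x y = sqrtC k * sqrtC '[f x - f y].
  move=> Sx Sy; rewrite DE // sqrtCM ?nnegrE ?dnorm_ge0 //; exact: ltW.
have sqrtk_ge0 : 0 <= sqrtC k by rewrite sqrtC_ge0 ltW.
split=> [x y Sx Sy | x y Sx Sy | x y Sx Sy | x y z Sx Sy Sz]; rewrite ?DE //.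
- by rewrite mulr_ge0 // sqrtC_ge0 dnorm_ge0.
- split=> [/eqP | ->]; last by rewrite subrr linear0l sqrtC0 mulr0.
  rewrite mulf_eq0 !sqrtC_eq0 (gt_eqF k_gt0) dnorm_eq0 subr_eq0.
  by move=> /eqP /f_inj.
- by rewrite -opprB hnormN.
- rewrite -mulrDr ler_wpM2l //.
  by have [+ _] := triangle_lerif (@dotmx C m) (f x - f y) (f y - f z); rewrite addrA subrK.
Qed.

Section DotmxBlocks.
Variable C : numClosedFieldType.

Lemma dotmx_row_mx m1 m2 (u v : 'rV[C]_m1) (x y : 'rV[C]_m2) :
  '[row_mx u x, row_mx v y] = '[u, v] + '[x, y].
Proof. by rewrite !dotmxE tr_row_mx map_col_mx mul_row_col mxE. Qed.

Lemma dotmx_scalar (a b : C) : '[a%:M, b%:M] = a * b^*.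
Proof. by rewrite dotmxE !mxE big_ord1 !mxE !eqxx !mulr1n. Qed.

Lemma dotmx_mxvec m p (A B : 'M[C]_(m, p)) : '[mxvec A, mxvec B] = \tr (A *m B ^t*).
Proof.
rewrite dotmxE mxE (reindex _ (curry_mxvec_bij _ _)) /mxtrace.
under [RHS]eq_bigr do rewrite mxE.
by rewrite pair_bigA; apply: eq_bigr => -[i j] _; rewrite !mxE !mxvecE.
Qed.

End DotmxBlocks.

Section DensityVector.
Variables (C : numClosedFieldType) (n : nat).
Implicit Types A B : 'M[C]_n.

Lemma psd_trmxC A : psd A -> A ^t* = A.
Proof. by case=> adjA _; rewrite -[RHS]adjA; apply/matrixP => i j; rewrite !mxE. Qed.

Lemma adjmx_add_scale_delta (x y : C) (i j : 'I_n) :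
  adjmx (x *: delta_mx i 0 + y *: delta_mx j 0 : 'cV[C]_n) =
  x^* *: delta_mx 0 i + y^* *: delta_mx 0 j.
Proof.
apply/matrixP => a b; rewrite !mxE rmorphD !rmorphM /= !rmorph_nat.
by rewrite !(andbC (a == 0)).
Qed.

Lemma psd_form2 (x y : C) i j A : psd A ->
  0 <= x^* * x * A i i + x^* * y * A i j + y^* * x * A j i + y^* * y * A j j.
Proof.
move=> psdA; have := psdA.2 (x *: delta_mx i 0 + y *: delta_mx j 0).
rewrite adjmx_add_scale_delta !mulmxDl !mulmxDr -!scalemxAl -!scalemxAr.
by rewrite -!rowE -!colE !mxE !mulrA addrA.
Qed.

Lemma psd_entryC A i j : psd A -> A j i = (A i j)^*.
Proof. by move=> /psd_trmxC {1}<-; rewrite !mxE. Qed.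

Lemma psd_diag_ge0 A i : psd A -> 0 <= A i i.
Proof.
move=> /(psd_form2 1 0 i i).
by rewrite rmorph1 rmorph0 !(mul0r, mulr0, mul1r, addr0).
Qed.

Lemma psd_minor2 A i j : psd A -> A i j * (A i j)^* <= A i i * A j j.
Proof.
(* The test vectors b e_i - c^* e_j and c e_i - a e_j give (a + b) (a b - m) >= 0;
   the vector e_i - c^* e_j settles the case a = b = 0. *)
move=> psdA; set a := A i i; set b := A j j; set c := A i j; set m := c * c^*.
have a_ge0 : 0 <= a := psd_diag_ge0 i psdA.
have b_ge0 : 0 <= b := psd_diag_ge0 j psdA.
have [aC bC] : a^* = a /\ b^* = b by rewrite !conj_Creal ?ger0_real.
have cji : A j i = c^* := psd_entryC i j psdA.
have h1 : 0 <= b * (a * b - m).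
  have := psd_form2 b (- c^*) i j psdA; rewrite -/a -/b -/c cji bC rmorphN /= conjCK.
  by rewrite [X in 0 <= X -> _](_ : _ = b * (a * b - m)) // /m; ring.
have h2 : 0 <= a * (a * b - m).
  have := psd_form2 c (- a) i j psdA; rewrite -/a -/b -/c cji rmorphN /= aC.
  by rewrite [X in 0 <= X -> _](_ : _ = a * (a * b - m)) // /m; ring.
have h3 : m *+ 2 <= a + b * m.
  have := psd_form2 1 (- c^*) i j psdA; rewrite -/a -/b -/c cji rmorph1 rmorphN /= conjCK.
  by rewrite [X in 0 <= X -> _](_ : _ = a + b * m - m *+ 2) ?subr_ge0 // /m; ring.
rewrite -subr_ge0; have [ab0 | ab_neq0] := eqVneq (a + b) 0.
  move: h3; move/eqP: ab0; rewrite paddr_eq0 // => /andP[/eqP-> /eqP->].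
  by rewrite mul0r addr0 pmulrn_lle0 // mulr0 sub0r oppr_ge0.
have ab_gt0 : 0 < a + b by rewrite lt_def ab_neq0 addr_ge0.
by rewrite -(pmulr_rge0 _ ab_gt0) mulrDl addr_ge0.
Qed.

Lemma density_trace_sqr_le1 A : density_matrix A -> \tr (A *m A) <= 1.
Proof.
move=> [psdA trA1]; have -> : 1 = \tr A * \tr A by rewrite trA1 mulr1.
rewrite /mxtrace big_distrlr /=; apply: ler_sum => i _; rewrite mxE.
apply: ler_sum => j _; rewrite (psd_entryC i j psdA); exact: psd_minor2.
Qed.

Definition density_vec A : 'rV[C]_(n * n + 1) :=
  row_mx (mxvec A) (sqrtC (1 - \tr (A *m A)))%:M.

Lemma density_vec_inj : injective density_vec.
Proof. by move=> A B /eq_row_mx[/(can_inj (@mxvecK _ _ _))]. Qed.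

Lemma dotmx_density_vec A B : density_matrix A -> density_matrix B ->
  '[density_vec A, density_vec B] =
  \tr (A *m B) + sqrtC (1 - \tr (A *m A)) * sqrtC (1 - \tr (B *m B)).
Proof.
move=> _ dB; rewrite dotmx_row_mx dotmx_mxvec dotmx_scalar (psd_trmxC dB.1).
by rewrite conj_Creal // ger0_real // sqrtC_ge0 subr_ge0 density_trace_sqr_le1.
Qed.

Lemma dnormB_density_vec A B : density_matrix A -> density_matrix B ->
  '[density_vec A - density_vec B] =
  2 * (1 - (\tr (A *m B) + sqrtC (1 - \tr (A *m A)) * sqrtC (1 - \tr (B *m B)))).
Proof.
move=> dA dB; rewrite dnormB /=.
have -> : '[density_vec A, density_vec B]^* = '[density_vec B, density_vec A].
  by rewrite hermC /= expr0 mul1r conjCK.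
by rewrite !dotmx_density_vec // (mxtrace_mulC B A) -!expr2 !sqrtCK; ring.
Qed.

Lemma distC_density_vec A B : density_matrix A -> density_matrix B ->
  distC A B = sqrtC ((1 + ((n - 1)%:R)^-1) / 4 * '[density_vec A - density_vec B]).
Proof.
move=> dA dB; rewrite dnormB_density_vec // /distC /FC.
by set r := ((n - 1)%:R)^-1; congr sqrtC; field.
Qed.

End DensityVector.

Theorem theorem10 (R : realType) (d : nat) (hd : (2 <= d)%N) :
  metric_on (@density_matrix R[i] d) (@distC R[i] d).
Proof.
apply: metric_on_dotmx_pullback (@density_vec_inj _ d) (@distC_density_vec _ d).
by rewrite divr_gt0 ?ltr0n // ltr_wpDr ?invr_ge0 ?ler0n.
Qed.
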